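(* For $n>2$ and $1<k<n$, the graph $G=H_B(n,k)$ has diameter $\mathrm{diam}(G)=4$ and radius $\mathrm{rad}(G)=2$.
   Context: Fix integers $n\ge 2$ and $1\le k<n$ and positive real numbers $x_1<x_2<\dots<x_n$. Let $\mathscr{B}_n=\{\pm x_1,\pm x_2,\dots,\pm x_{n-1},x_n\}$ (so $-x_n\notin\mathscr{B}_n$). Let $\phi(\mathscr{B}_n)$ be the family of all nonempty subsets $S\subseteq\mathscr{B}_n$ whose elements have pairwise distinct absolute values and whose element of largest absolute value is positive. Let $\mathscr{B}_n^+=\{x_1,\dots,x_n\}$, let $V_1$ be the set of all $k$-element subsets of $\mathscr{B}_n^+$, and let $V_2=\phi(\mathscr{B}_n)\setminus V_1$. For $A\in\phi(\mathscr{B}_n)$ put $A^\dagger=\{|a|:a\in A\}$. The bipartite Kneser B type-$k$ graph $H_B(n,k)$ is the simple graph with vertex set $V_1\cup V_2$ in which $X\in V_1$ and $Y\in V_2$ are adjacent if and only if $X\subseteq Y^\dagger$ or $Y^\dagger\subseteq X$, and there are no other edges. *)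

From mathcomp Require Import all_boot.
Set Implicit Arguments. Unset Strict Implicit. Unset Printing Implicit Defensive.

Section Graph.
Variables (T : finType) (V : {set T}) (e : rel T).

Fixpoint ball (x : T) (d : nat) : {set T} :=
  match d with
  | 0 => [set x]
  | d'.+1 => ball x d' :|: [set y in V | [exists z in ball x d', e z y]]
  end.

Definition gconnected : Prop :=
  forall x y, x \in V -> y \in V -> exists d, y \in ball x d.

(* graph distance (correct when y is reachable from x; walks of length
   < #|V| suffice) *)
Definition gdist (x y : T) : nat := find (fun d => y \in ball x d) (iota 0 #|V|).

Definition ecc (x : T) : nat := \max_(y in V) gdist x y.
Definition diam : nat := \max_(x in V) ecc x.
Definition rad : nat := \big[minn/#|V|]_(x in V) ecc x.
End Graph.

(* The element (i, true) encodes +x_{i+1}, (i, false) encodes -x_{i+1},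
   for i : 'I_n (0-based indices).  Since 0 < x_1 < ... < x_n, the absolute
   value |±x_{i+1}| = x_{i+1} is encoded by i, and comparison of absolute
   values is comparison of indices. *)
Definition elt (n : nat) := ('I_n * bool)%type.

(* membership in B_n = {±x_1,...,±x_{n-1}, x_n} *)
Definition inB n (a : elt n) : bool := a.2 || (val a.1 != n.-1).

Definition absv n (S : {set elt n}) : {set 'I_n} := [set a.1 | a in S].

Definition phiB n (S : {set elt n}) : bool :=
  [&& S != set0,
      [forall a in S, inB a],
      [forall a in S, forall b in S, (a.1 == b.1) ==> (a == b)] &
      [forall a in S, [forall b in S, b.1 <= a.1] ==> a.2]].

Definition V1 n k (S : {set elt n}) : bool := [forall a in S, a.2] && (#|S| == k).
Definition V2 n k (S : {set elt n}) : bool := phiB S && ~~ V1 k S.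

Definition HBvert n k : {set {set elt n}} := [set S | V1 k S || V2 k S].

Definition HBadj n k : rel {set elt n} := fun X Y =>
  (V1 k X && V2 k Y && ((absv X \subset absv Y) || (absv Y \subset absv X))) ||
  (V1 k Y && V2 k X && ((absv Y \subset absv X) || (absv X \subset absv Y))).

From mathcomp Require Import all_boot zify.
Set Implicit Arguments. Unset Strict Implicit. Unset Printing Implicit Defensive.

(* The full positive set {x_1, ..., x_n} is adjacent to every vertex of V1,
   and every vertex of V2 is adjacent to some vertex of V1 (a k-set nested with
   its absolute values), so this hub is at distance <= 2 from everything: the
   radius is at most 2 and the diameter at most 4.  As the graph is bipartite
   with sides V1 and V2, two vertices of V2 at distance <= 3 are equal or have a
   common neighbour in V1; {x_1} and {-x_2, x_3, ..., x_n} have none, since a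
   k-set nested with both would have to contain x_1 and all of x_2, ..., x_n.
   No vertex is adjacent to all others, so the radius is at least 2. *)

Section Balls.
Variables (T : finType) (V : {set T}) (e : rel T).
Local Notation ball := (ball V e).
Local Notation gdist := (gdist V e).

Lemma in_ballS x d y :
  (y \in ball x d.+1) = (y \in ball x d) || (y \in V) && [exists z in ball x d, e z y].
Proof. by rewrite /= in_setU in_set. Qed.

Lemma in_ball1 x y : (y \in ball x 1) = (y == x) || (y \in V) && e x y.
Proof.
rewrite in_ballS in_set1; congr (_ || (_ && _)).
by apply/existsP/idP => [[z /andP[/set1P -> //]] | exy]; exists x; rewrite set11.
Qed.

Lemma ball_center x d : x \in ball x d.
Proof. by elim: d => [|d IH]; rewrite ?set11 // in_ballS IH. Qed.

Lemma ball_step x d z y : z \in ball x d -> e z y -> y \in V -> y \in ball x d.+1.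
Proof.
by move=> zx ezy yV; rewrite in_ballS yV; apply/orP; right; apply/existsP; exists z; rewrite zx.
Qed.

Lemma ball_mono x d d' : d <= d' -> ball x d \subset ball x d'.
Proof.
move/subnK <-; elim: (d' - d) => [|m IH]; first exact: subxx.
by apply: subset_trans IH _; apply/subsetP => y; rewrite addSn in_ballS => ->.
Qed.

Lemma ball_trans x y z d d' : y \in ball x d -> z \in ball y d' -> z \in ball x (d + d').
Proof.
move=> yx; elim: d' z => [|d' IH] z; first by rewrite addn0 => /set1P ->.
rewrite in_ballS addnS => /orP[/IH zx | /andP[zV /existsP[w /andP[/IH wx ewz]]]].
  by move/subsetP: (ball_mono x (leqnSn (d + d'))); apply.
exact: ball_step wx ewz zV.
Qed.

Lemma ball_sub x d : x \in V -> ball x d \subset V.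
Proof.
move=> xV; elim: d => [|d IH]; first by rewrite sub1set.
by rewrite /= subUset IH; apply/subsetP => y; rewrite inE => /andP[].
Qed.

Lemma ball1_sym x y : symmetric e -> x \in V -> y \in ball x 1 -> x \in ball y 1.
Proof.
move=> esym xV; rewrite !in_ball1 => /orP[/eqP -> | /andP[_ exy]]; first by rewrite eqxx.
by rewrite xV esym exy orbT.
Qed.

Lemma ball_eqS x d : ball x d = ball x d.+1 -> ball x d.+1 = ball x d.+2.
Proof.
move=> E; have -> : ball x d.+2 = ball x d.+1 :|: [set y in V | [exists z in ball x d.+1, e z y]].
  by [].
by rewrite -[in RHS]E.
Qed.

Lemma card_ball x d : ball x d != ball x d.+1 -> d < #|ball x d|.
Proof.
elim: d => [|d IH] neq; first by rewrite /= cards1.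
have neq' : ball x d != ball x d.+1 by apply: contra_neq neq; apply: ball_eqS.
apply: leq_ltn_trans (IH neq') (proper_card _).
by rewrite properEneq neq' ball_mono.
Qed.

(* A ball that stops growing never grows again, and until then it gains a
   vertex at each step. *)
Lemma ball_stable x d : x \in V -> ball x d \subset ball x #|V|.-1.
Proof.
move=> xV; set N := #|V|.-1.
have stepN m : N <= m -> ball x m = ball x m.+1.
  move=> Nm; apply/eqP; apply: contraT => neq.
  have : m.+1 < #|ball x m.+1|.
    apply: leq_ltn_trans (card_ball neq) (proper_card _).
    by rewrite properEneq neq ball_mono.
  have := subset_leq_card (ball_sub m.+1 xV); have : 0 < #|V| by apply/card_gt0P; exists x.
  lia.
have [dN | Nd] := leqP d N; first exact: ball_mono.
rewrite -(subnK (ltnW Nd)); elim: (d - N) => [|j IH] //.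
by rewrite addSn -stepN ?leq_addl.
Qed.

Lemma gdist_le x y d : y \in ball x d -> gdist x y <= d.
Proof.
move=> yx; rewrite /gdist; have [dV | Vd] := ltnP d #|V|.
  rewrite leqNgt; apply/negP => /(before_find 0).
  by rewrite nth_iota // add0n yx.
by apply: leq_trans (find_size _ _) _; rewrite size_iota.
Qed.

Section Connected.
Hypothesis connV : gconnected V e.

Lemma ball_gdist x y : x \in V -> y \in V -> y \in ball x (gdist x y) /\ gdist x y < #|V|.
Proof.
move=> xV yV; have [d yxd] := connV xV yV.
have V0 : 0 < #|V| by apply/card_gt0P; exists x.
have yN : y \in ball x #|V|.-1 by move/subsetP: (ball_stable d xV); apply.
have hasy : has (fun d => y \in ball x d) (iota 0 #|V|).
  by apply/hasP; exists #|V|.-1 => //; rewrite mem_iota add0n prednK // leqnn andbT.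
have lt : gdist x y < #|V| by move: hasy; rewrite has_find size_iota.
split=> //; move: (nth_find 0 hasy); rewrite nth_iota ?add0n //.
Qed.

Lemma mem_ball_gdist x y d : x \in V -> y \in V -> (y \in ball x d) = (gdist x y <= d).
Proof.
move=> xV yV; apply/idP/idP; first exact: gdist_le.
by case: (ball_gdist xV yV) => yx _ le; move/subsetP: (ball_mono x le); apply.
Qed.

Lemma ecc_gtn x y d : x \in V -> y \in V -> y \notin ball x d -> d < ecc V e x.
Proof.
move=> xV yV; rewrite mem_ball_gdist // -ltnNge => lt.
exact: leq_trans lt (leq_bigmax_cond _ yV).
Qed.

Lemma diam_gtn x y d : x \in V -> y \in V -> y \notin ball x d -> d < diam V e.
Proof. by move=> xV yV yx; apply: leq_trans (ecc_gtn xV yV yx) (leq_bigmax_cond _ xV). Qed.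

Lemma rad_gtn d : V != set0 ->
  (forall x, x \in V -> exists2 y, y \in V & y \notin ball x d) -> d < rad V e.
Proof.
case/set0Pn => x0 x0V far.
have dV : d < #|V|.
  have [y yV yx] := far x0 x0V; have [_ lt] := ball_gdist x0V yV.
  by rewrite mem_ball_gdist // -ltnNge in yx; exact: ltn_trans yx lt.
apply: (big_ind (fun m => d < m)) => // [a b da db | x xV]; first by rewrite leq_min da db.
by have [y yV yx] := far x xV; exact: ecc_gtn xV yV yx.
Qed.

End Connected.

Lemma ecc_leq x d : (forall y, y \in V -> y \in ball x d) -> ecc V e x <= d.
Proof. move=> H; apply/bigmax_leqP => y /H; apply: gdist_le. Qed.

Lemma diam_leq d : (forall x y, x \in V -> y \in V -> y \in ball x d) -> diam V e <= d.
Proof. by move=> H; apply/bigmax_leqP => x xV; apply: ecc_leq => y; apply: H. Qed.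

Lemma rad_leq x d : x \in V -> (forall y, y \in V -> y \in ball x d) -> rad V e <= d.
Proof.
move=> xV near; apply: leq_trans _ (ecc_leq near); rewrite /rad.
have : x \in index_enum T by rewrite mem_index_enum.
elim: (index_enum T) => // i s IH; rewrite inE big_cons => /predU1P[<- | xs].
  by rewrite xV geq_minl.
by case: (i \in V); [apply: leq_trans (geq_minr _ _) (IH xs) | exact: IH].
Qed.

Section Hub.
Variables (h : T) (W : pred T).
Hypotheses (esym : symmetric e) (hV : h \in V).
Hypothesis hub_adj : forall w, W w -> w \in ball h 1.
Hypothesis W_dom : forall x, x \in V -> exists2 w, W w & x \in ball w 1.

Lemma ball_hub2 y : y \in V -> y \in ball h 2.
Proof. by case/W_dom => w /hub_adj wh yw; exact: ball_trans wh yw. Qed.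

Lemma hub_in_ball2 x : x \in V -> h \in ball x 2.
Proof.
case/W_dom => w /hub_adj wh xw.
have wV : w \in V by move/subsetP: (ball_sub 1 hV); apply.
exact: ball_trans (ball1_sym esym wV xw) (ball1_sym esym hV wh).
Qed.

Lemma ball_hub4 x y : x \in V -> y \in V -> y \in ball x 4.
Proof. by move=> /hub_in_ball2 hx /ball_hub2; exact: ball_trans hx. Qed.

End Hub.

Section Bipartite.
Variable A : pred T.
Hypothesis e_cross : forall a b, e a b -> A a != A b.
Variable x : T.
Hypothesis Ax : ~~ A x.

Lemma ball1_side z : z \in ball x 1 -> z = x \/ A z && e x z.
Proof.
rewrite in_ball1 => /orP[/eqP-> | /andP[_ exz]]; [by left | right].
by move: (e_cross exz); rewrite exz (negbTE Ax) andbT; case: (A z).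
Qed.

Lemma ball2_side z : z \in ball x 2 -> A z -> e x z.
Proof.
rewrite in_ballS => /orP[/ball1_side[-> | /andP[_ //]] | /andP[_ /existsP[w /andP[]]]].
  by rewrite (negbTE Ax).
case/ball1_side => [-> // | /andP[Aw _] ewz Az].
by move: (e_cross ewz); rewrite Aw Az.
Qed.

Lemma ball3_side y : y \in ball x 3 -> ~~ A y -> y = x \/ exists z, e x z && e z y.
Proof.
move=> + Ay; have Ay' := negbTE Ay.
rewrite in_ballS => /orP[].
  rewrite in_ballS => /orP[/ball1_side[-> | /andP[]] | /andP[_ /existsP[w /andP[]]]].
  - by left.
  - by rewrite Ay'.
  case/ball1_side => [-> exy | /andP[_ exw] ewy]; last by right; exists w; rewrite exw.
  by move: (e_cross exy); rewrite Ay' (negbTE Ax).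
case/andP => _ /existsP[w /andP[wx ewy]]; right; exists w; rewrite ewy andbT.
by apply: ball2_side wx _; move: (e_cross ewy); rewrite Ay'; case: (A w).
Qed.

End Bipartite.
End Balls.

Lemma exists_subset_card (T : finType) (A : {set T}) m :
  m <= #|A| -> exists2 B : {set T}, B \subset A & #|B| = m.
Proof.
rewrite -bin_gt0 -cards_draws => /card_gt0P[B]; rewrite inE => /andP[sBA /eqP <-].
by exists B.
Qed.

Lemma exists_nested_card (T : finType) (A : {set T}) m :
  m <= #|T| -> exists2 B : {set T}, #|B| = m & (B \subset A) || (A \subset B).
Proof.
move=> mT; have [mA | Am] := leqP m #|A|.
  by have [B sBA cB] := exists_subset_card mA; exists B; rewrite ?sBA.
have : #|T| - m <= #|~: A| by rewrite cardsCs setCK; lia.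
case/exists_subset_card => D sDA cD; exists (~: D); last by rewrite subsetC sDA orbT.
by rewrite cardsCs setCK cD; lia.
Qed.

Section SignedSets.
Variable n : nat.
Implicit Types (P : pred 'I_n) (s : 'I_n -> bool) (B : {set 'I_n}) (X : {set elt n}).

Definition signed_set P s : {set elt n} := [set a : elt n | P a.1 && (a.2 == s a.1)].

Lemma absv_signed_set P s : absv (signed_set P s) = [set i | P i].
Proof.
apply/setP => i; rewrite inE; apply/imsetP/idP => [[a] | Pi].
  by rewrite inE => /andP[Pa _] ->.
by exists (i, s i); rewrite // inE Pi eqxx.
Qed.

Lemma phiB_signed_set P s m : P m -> s m -> (forall i, P i -> i <= m) ->
  (forall i, P i -> val i = n.-1 -> s i) -> phiB (signed_set P s).
Proof.
move=> Pm sm le_m s_last; apply/and4P; split.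
- by apply/set0Pn; exists (m, s m); rewrite inE Pm eqxx.
- apply/forall_inP => -[i b]; rewrite inE /= => /andP[Pi /eqP ->].
  rewrite /inB /=; case: (val i =P n.-1) => [/(s_last _ Pi) -> // | /eqP ne]; exact/orP/or_intror.
- apply/forall_inP => -[i b]; rewrite inE /= => /andP[_ /eqP ->].
  by apply/forall_inP => -[j c]; rewrite inE /= => /andP[_ /eqP ->]; apply/implyP => /eqP ->.
- apply/forall_inP => -[i b]; rewrite inE /= => /andP[Pi /eqP ->].
  apply/implyP => /forall_inP/(_ (m, s m)); rewrite inE Pm eqxx => /(_ isT) /= le_mi.
  by have -> : i = m by apply/val_inj/eqP; rewrite eqn_leq le_mi le_m.
Qed.

Definition pos_set B : {set elt n} := signed_set (mem B) xpredT.

Lemma in_pos_set B a : (a \in pos_set B) = (a.1 \in B) && a.2.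
Proof. by rewrite inE eqb_id. Qed.

Lemma absv_pos_set B : absv (pos_set B) = B.
Proof. by rewrite absv_signed_set; apply/setP => i; rewrite inE. Qed.

Lemma card_absv X : {in X &, injective fst} -> #|absv X| = #|X|.
Proof. exact: card_in_imset. Qed.

Lemma V1_pos_set k B : V1 k (pos_set B) = (#|B| == k).
Proof.
have -> : #|B| = #|pos_set B|.
  rewrite -[in LHS](absv_pos_set B) card_absv // => -[i b] [j c].
  by rewrite !in_pos_set /= => /andP[_ ->] /andP[_ ->] /= ->.
by rewrite /V1 andb_idl // => _; apply/forall_inP => a; rewrite in_pos_set => /andP[].
Qed.

Lemma card_absv_V1 k X : V1 k X -> #|absv X| = k.
Proof.
case/andP => /forall_inP X_pos /eqP <-; apply: card_absv => -[i b] [j c].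
by move=> /X_pos /= -> /X_pos /= -> /= ->.
Qed.

Lemma V2_pos_set k B : B != set0 -> #|B| != k -> V2 k (pos_set B).
Proof.
case/set0Pn => i0 i0B cardB; rewrite /V2 V1_pos_set cardB andbT.
case: (arg_maxnP val i0B) => m mB max_m.
by apply: (phiB_signed_set mB) => // i iB; apply: max_m.
Qed.

(* {-x_2, x_3, ..., x_n}: the sign of x_2 keeps it out of V1 even when k = n - 1. *)
Definition tail_vertex : {set elt n} := signed_set (fun i => 0 < i) (fun i => val i != 1).

Lemma absv_tail_vertex : absv tail_vertex = [set i | 0 < val i].
Proof. exact: absv_signed_set. Qed.

Lemma V2_tail_vertex k : 2 < n -> V2 k tail_vertex.
Proof.
move=> n_gt2; have last_n : n.-1 < n by lia.
apply/andP; split.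
  apply: (@phiB_signed_set _ _ (Ordinal last_n)) => /=; try lia.
  by move=> i _; have := ltn_ord i; lia.
have one_n : 1 < n by lia.
apply/negP => /andP[/forall_inP /(_ (Ordinal one_n, false))].
by rewrite inE /= => /(_ isT).
Qed.

End SignedSets.

Section KneserB.
Variables n k : nat.
Implicit Types X Y W : {set elt n}.
Local Notation V := (HBvert n k).
Local Notation adj := (@HBadj n k).
Local Notation ball := (ball V adj).

Lemma V2_V1F X : V2 k X -> V1 k X = false.
Proof. by case/andP => _ /negbTE. Qed.

Lemma in_HBvert X : (X \in V) = V1 k X || V2 k X.
Proof. by rewrite inE. Qed.

Lemma HBadj_sym : symmetric adj.
Proof. by move=> X Y; rewrite /HBadj orbC. Qed.

Lemma HBadj_V1 W X : V1 k W ->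
  adj W X = V2 k X && ((absv W \subset absv X) || (absv X \subset absv W)).
Proof.
move=> W1; have W2 : V2 k W = false by rewrite /V2 W1 andbF.
by rewrite /HBadj W1 W2 andbF orbF.
Qed.

Lemma HBadj_cross X Y : adj X Y -> V1 k X != V1 k Y.
Proof.
by case/orP => /andP[/andP[A1 /V2_V1F B1] _]; rewrite A1 B1.
Qed.

Definition hub : {set elt n} := pos_set [set: 'I_n].

Lemma V2_hub : k < n -> V2 k hub.
Proof.
move=> k_lt_n; apply: V2_pos_set; last by rewrite cardsT card_ord neq_ltn k_lt_n orbT.
by apply/set0Pn; exists (Ordinal (leq_ltn_trans (leq0n k) k_lt_n)).
Qed.

Lemma V1_in_ball_hub W : k < n -> V1 k W -> W \in ball hub 1.
Proof.
move=> k_lt_n W1; rewrite in_ball1 in_HBvert W1 HBadj_sym HBadj_V1 //.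
by rewrite V2_hub // absv_pos_set subsetT orbT.
Qed.

Lemma V1_dominating X : k <= n -> X \in V -> exists2 W, V1 k W & X \in ball W 1.
Proof.
move=> k_le_n; rewrite in_HBvert => /orP[X1 | X2]; first by exists X; rewrite ?ball_center.
have [|B cardB nestB] := exists_nested_card (absv X) (m := k); first by rewrite card_ord.
have B1 : V1 k (pos_set B) by rewrite V1_pos_set cardB.
exists (pos_set B) => //.
by rewrite in_ball1 in_HBvert X2 orbT HBadj_V1 // X2 absv_pos_set nestB orbT.
Qed.

Lemma V2_singleton (i : 'I_n) : 1 < k -> V2 k (pos_set [set i]).
Proof.
move=> k_gt1; apply: V2_pos_set; last by rewrite cards1 neq_ltn k_gt1.
by apply/set0Pn; exists i; rewrite set11.
Qed.

Lemma exists_nonneighbour X : 1 < k -> k < n -> X \in V ->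
  exists2 Y, Y \in V & Y \notin ball X 1.
Proof.
move=> k_gt1 k_lt_n; rewrite in_HBvert => /orP[X1 | X2].
  have [i _ iX] : exists2 i, i \in [set: 'I_n] & i \notin absv X.
    apply/subsetPn; apply: contraTN k_lt_n => /subset_leq_card.
    by rewrite cardsT card_ord (card_absv_V1 X1) -leqNgt.
  have Y2 := V2_singleton i k_gt1.
  exists (pos_set [set i]); first by rewrite in_HBvert Y2 orbT.
  rewrite in_ball1 HBadj_V1 // Y2 absv_pos_set sub1set (negbTE iX) orbF /= negb_or.
  apply/andP; split; first by apply: contraTneq Y2 => ->; rewrite /V2 X1 andbF.
  apply/nandP; right; apply/negP => /subset_leq_card.
  by rewrite cards1 (card_absv_V1 X1) leqNgt k_gt1.
have n_gt1 : 1 < n := ltn_trans k_gt1 k_lt_n.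
set S0 := pos_set [set Ordinal (ltnW n_gt1)]; set S1 := pos_set [set Ordinal n_gt1].
have [Y Y2 YX] : exists2 Y, V2 k Y & Y != X.
  have S01 : S0 != S1.
    by apply/eqP => /setP/(_ (Ordinal (ltnW n_gt1), true)); rewrite !in_pos_set !inE.
  case: (eqVneq X S0) => [-> | XS0]; [exists S1 | exists S0];
    by rewrite ?V2_singleton // eq_sym.
exists Y; first by rewrite in_HBvert Y2 orbT.
rewrite in_ball1 (negbTE YX) /=; apply/negP => /andP[_ /HBadj_cross].
by rewrite !V2_V1F.
Qed.

Lemma tail_notin_ball3 (i0 : 'I_n) : 2 < n -> 1 < k -> k < n -> val i0 = 0 ->
  tail_vertex n \notin ball (pos_set [set i0]) 3.
Proof.
move=> n_gt2 k_gt1 k_lt_n i0_0; set S := pos_set [set i0].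
have S1 : V1 k S = false by rewrite V2_V1F ?V2_singleton.
have T1 : V1 k (tail_vertex n) = false by rewrite V2_V1F ?V2_tail_vertex.
apply/negP => /(ball3_side HBadj_cross); rewrite S1 T1 => /(_ isT isT) [TS | [W /andP[SW WT]]].
  by move: (in_pos_set [set i0] (i0, true)); rewrite -/S -TS !inE /= i0_0 eqxx.
have W1 : V1 k W by move: (HBadj_cross SW); rewrite S1; case: (V1 k W).
rewrite HBadj_sym HBadj_V1 // absv_pos_set in SW; rewrite HBadj_V1 // absv_tail_vertex in WT.
case/andP: SW => _ /orP[/subset_leq_card | i0W].
  by rewrite cards1 (card_absv_V1 W1) leqNgt k_gt1.
case/andP: WT => _ /orP[/subsetP/(_ i0) | /subsetP tail_W].
  by rewrite inE i0_0 -sub1set => /(_ i0W).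
have : [set: 'I_n] \subset absv W.
  apply/subsetP => i _; case: (posnP (val i)) => [i_0 | i_pos]; last by apply: tail_W; rewrite inE.
  by rewrite -sub1set (_ : i = i0) //; apply: val_inj; rewrite /= i_0 i0_0.
by move/subset_leq_card; rewrite cardsT card_ord (card_absv_V1 W1) leqNgt k_lt_n.
Qed.

End KneserB.

Theorem mainTheorem13 (n k : nat) (hn : 2 < n) (hk1 : 1 < k) (hkn : k < n) :
  [/\ gconnected (HBvert n k) (@HBadj n k),
      diam (HBvert n k) (@HBadj n k) = 4
    & rad (HBvert n k) (@HBadj n k) = 2].
Proof.
have hubV : hub n \in HBvert n k by rewrite in_HBvert V2_hub ?orbT.
have hub_adj := V1_in_ball_hub hkn.
have V1_dom := V1_dominating (ltnW hkn).
have ball4 := ball_hub4 (@HBadj_sym n k) hubV hub_adj V1_dom.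
have conn : gconnected (HBvert n k) (@HBadj n k).
  by move=> x y xV yV; exists 4; exact: ball4.
have n_gt0 : 0 < n by lia.
set S := pos_set [set Ordinal n_gt0].
have SV : S \in HBvert n k by rewrite in_HBvert V2_singleton ?orbT.
have tailV : tail_vertex n \in HBvert n k by rewrite in_HBvert V2_tail_vertex ?orbT.
split=> //; apply/eqP; rewrite eqn_leq.
- rewrite (diam_leq ball4) /=.
  exact: (diam_gtn conn SV tailV (tail_notin_ball3 (i0 := Ordinal n_gt0) hn hk1 hkn erefl)).
- rewrite (rad_leq hubV (ball_hub2 hub_adj V1_dom)) /=.
  apply: (rad_gtn conn); first by apply/set0Pn; exists S.
  by move=> X; apply: exists_nonneighbour.
Qed.
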